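(* Let $m=pq$ with $p,q$ distinct primes. For each $n\ge2$ and each $i$ with $2\le i\le n$ there exists an edge-labeling $\alpha$ of the complete graph $K_n$ by ideals of $\mathbb{Z}/m\mathbb{Z}$ such that $\operatorname{rk}[\mathbb{Z}/m\mathbb{Z}]_{(K_n,\alpha)}=i$.
   Context: An edge-labeling assigns to each edge of a graph a nonzero proper ideal of $\mathbb{Z}/m\mathbb{Z}$. A spline on an edge-labeled graph $(G,\alpha)$ with vertices $v_1,\dots,v_n$ is a vector $(f_{v_1},\dots,f_{v_n})\in(\mathbb{Z}/m\mathbb{Z})^n$ with $f_{v_i}-f_{v_j}\in\alpha(v_iv_j)$ for every edge; the splines form a $\mathbb{Z}$-module $[\mathbb{Z}/m\mathbb{Z}]_{(G,\alpha)}$, whose rank $\operatorname{rk}$ is the smallest size of a generating set. *)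

From HB Require Import structures.
From mathcomp Require Import all_boot all_order all_algebra.
Set Implicit Arguments. Unset Strict Implicit. Unset Printing Implicit Defensive.
Import Order.TTheory GRing.Theory Num.Theory.
Local Open Scope ring_scope.

(* Ideals of the ring Z/mZ (modelled as 'Z_m, which is Z/mZ for m >= 2). *)
Definition is_ideal (m : nat) (I : {set 'Z_m}) : Prop :=
  [/\ (0 : 'Z_m) \in I,
      (forall x y, x \in I -> y \in I -> x + y \in I) &
      (forall r x, x \in I -> r * x \in I)].

Definition nonzero_proper_ideal (m : nat) (I : {set 'Z_m}) : Prop :=
  [/\ is_ideal I, I != [set 0] & I != [set: 'Z_m]].

(* Edges of the complete graph K_n: two-element subsets of 'I_n.
   An edge-labeling assigns to each edge a nonzero proper ideal;
   the values of alpha on non-edges are irrelevant. *)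
Definition edge_labeling (n m : nat) (alpha : {set 'I_n} -> {set 'Z_m}) : Prop :=
  forall i j : 'I_n, i != j -> nonzero_proper_ideal (alpha [set i; j]).

Definition is_spline (n m : nat) (alpha : {set 'I_n} -> {set 'Z_m})
  (f : {ffun 'I_n -> 'Z_m}) : Prop :=
  forall i j : 'I_n, i != j -> f i - f j \in alpha [set i; j].

Definition generates (n m : nat) (alpha : {set 'I_n} -> {set 'Z_m})
  (S : {set {ffun 'I_n -> 'Z_m}}) : Prop :=
  (forall s, s \in S -> is_spline alpha s) /\
  (forall f, is_spline alpha f ->
     exists c : {ffun 'I_n -> 'Z_m} -> int, f = \sum_(s in S) s *~ c s).

Definition spline_rank_is (n m : nat) (alpha : {set 'I_n} -> {set 'Z_m})
  (r : nat) : Prop :=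
  (exists S, generates alpha S /\ #|S| = r) /\
  (forall S, generates alpha S -> (r <= #|S|)%N).

From mathcomp Require Import all_boot all_order all_algebra zify.
Set Implicit Arguments. Unset Strict Implicit. Unset Printing Implicit Defensive.
Import Order.TTheory GRing.Theory Num.Theory.
Local Open Scope ring_scope.

(* Label the edges inside a block B of vertices by (p) and all other edges by
   (q).  Comparing with a vertex outside B, a spline is constant on B, its
   differences there lying in (p) :&: (q) = 0; elsewhere it varies by
   multiples of q.  Hence it is an integer combination of the constant
   spline 1 and the splines q e_v, v \notin B, so the rank is at most
   #|~: B| + 1.  Conversely, q times a spline is p-torsion, so if S generates,
   the q-multiples of all splines are among the p ^ #|S| combinations of q S
   with coefficients in [0, p).  Yet the splines v |-> q d(v), with d
   constant on B and valued in [0, p), already have p ^ (#|~: B| + 1)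
   distinct q-multiples.  Choosing #|~: B| = i - 1 gives rank i. *)

Section IntegerSpan.
Variables (I : finType) (V : zmodType).
Implicit Types (A : {set I}) (F : I -> V).

Definition in_zspan A F (v : V) : Prop :=
  exists c : I -> int, v = \sum_(i in A) F i *~ c i.

Lemma in_zspan0 A F : in_zspan A F 0.
Proof. by exists (fun=> 0); rewrite big1 // => i _; rewrite mulr0z. Qed.

Lemma in_zspanD A F u v : in_zspan A F u -> in_zspan A F v -> in_zspan A F (u + v).
Proof.
move=> [c ->] [c' ->]; exists (fun i => c i + c' i).
by rewrite -big_split; apply: eq_bigr => i _; rewrite mulrzDr.
Qed.

Lemma in_zspan_sum A F (J : finType) (P : pred J) (G : J -> V) :
  (forall j, P j -> in_zspan A F (G j)) -> in_zspan A F (\sum_(j | P j) G j).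
Proof. by move=> GA; apply: big_ind => //; [exact: in_zspan0 | exact: in_zspanD]. Qed.

Lemma in_zspanMn A F i k : i \in A -> in_zspan A F (F i *+ k).
Proof.
move=> iA; exists (fun j => if j == i then k%:Z else 0).
rewrite (bigD1 i) //= eqxx -pmulrn big1 ?addr0 // => j /andP[_ /negbTE ->].
by rewrite mulr0z.
Qed.

Lemma in_zspan_mulrn A F v k :
  in_zspan A F v -> in_zspan A (fun i => F i *+ k) (v *+ k).
Proof.
move=> [c ->]; exists c; rewrite -sumrMnl; apply: eq_bigr => i _.
by rewrite !pmulrn -!mulrzA mulrC.
Qed.

Lemma mulrz_modz (x : V) N c : (0 < N)%N -> x *+ N = 0 -> x *~ c = x *+ absz (c %% N)%Z.
Proof.
move=> N_gt0 xN; rewrite pmulrn gez0_abs ?modz_ge0 //; last by rewrite eqz_nat -lt0n.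
by rewrite {1}(divz_eq c N) mulrzDr -mulrzA_C -pmulrn xN mul0rz add0r.
Qed.

Lemma card_le_zspan_torsion A F N (D : finType) (g : D -> V) :
  (0 < N)%N -> (forall i, i \in A -> F i *+ N = 0) -> injective g ->
  (forall d, in_zspan A F (g d)) -> (#|D| <= N ^ #|A|)%N.
Proof.
move=> N_gt0 FN g_inj g_span.
pose comb (e : {ffun 'I_#|A| -> 'I_N}) := \sum_(t < #|A|) F (enum_val t) *+ e t.
have coef d : exists e, g d == comb e.
  have [c ->] := g_span d.
  have modN_lt (t : 'I_#|A|) : (absz (c (enum_val t) %% N)%Z < N)%N.
    by rewrite -ltz_nat gez0_abs ?ltz_pmod ?modz_ge0 // eqz_nat -lt0n.
  exists [ffun t => Ordinal (modN_lt t)]; apply/eqP.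
  rewrite big_enum_val; apply: eq_bigr => t _; rewrite ffunE /=.
  by apply: mulrz_modz => //; apply/FN/enum_valP.
have coef_inj : injective (fun d => xchoose (coef d)).
  move=> d d' eq_coef; apply: g_inj.
  by rewrite (eqP (xchooseP (coef d))) (eqP (xchooseP (coef d'))) /= eq_coef.
by have := leq_card _ coef_inj; rewrite card_ffun !card_ord.
Qed.

End IntegerSpan.

Definition multiples (m d : nat) : {set 'Z_m} := [set x : 'Z_m | (d %| x)%N].

Section Multiples.
Variables (m d : nat).
Hypotheses (m_gt1 : (1 < m)%N) (d_dvd_m : (d %| m)%N).

Lemma multiples0 : 0 \in multiples m d.
Proof. by rewrite inE dvdn0. Qed.

Lemma natr_multiplesE k : ((k%:R : 'Z_m) \in multiples m d) = (d %| k)%N.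
Proof. by rewrite inE val_Zp_nat // [in RHS](divn_eq k m) dvdn_addr ?dvdn_mull. Qed.

Lemma multiples_ideal : is_ideal (multiples m d).
Proof.
split=> [|x y|r x]; first exact: multiples0.
  have -> : x + y = (x + y)%N%:R by rewrite natrD !natr_Zp.
  by rewrite natr_multiplesE !inE; apply: dvdn_add.
have -> : r * x = (r * x)%N%:R by rewrite natrM !natr_Zp.
by rewrite natr_multiplesE !inE; apply: dvdn_mull.
Qed.

Lemma multiplesB x y : x \in multiples m d -> y \in multiples m d -> x - y \in multiples m d.
Proof.
case: multiples_ideal => _ addI mulI xI yI.
by rewrite -mulN1r; apply/addI/mulI.
Qed.

Lemma multiples_nonzero_proper : (1 < d < m)%N -> nonzero_proper_ideal (multiples m d).
Proof.
case/andP=> d_gt1 d_lt_m; split; first exact: multiples_ideal.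
  apply/eqP => /setP/(_ d%:R); rewrite natr_multiplesE dvdnn inE => /esym/eqP.
  by move/(congr1 val); rewrite /= val_Zp_nat // modn_small //; lia.
apply/eqP => /setP/(_ 1); rewrite -[1]/(1%:R) natr_multiplesE inE dvdn1; lia.
Qed.

Lemma multiplesI_coprime e x : coprime d e -> (m %| d * e)%N ->
  x \in multiples m d -> x \in multiples m e -> x = 0.
Proof.
rewrite !inE => co_de m_dvd dx ex; have m_dvd_x : (m %| x)%N.
  by apply: dvdn_trans m_dvd _; rewrite Gauss_dvd // dx.
have x_lt_m : (x < m)%N by rewrite -[X in (_ < X)%N](Zp_cast m_gt1).
apply: val_inj => /=; case: (posnP x) => // x_gt0.
by have := dvdn_leq x_gt0 m_dvd_x; rewrite leqNgt x_lt_m.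
Qed.

End Multiples.

Lemma eqn_mod_mul_sqr p q x y : coprime p q -> (0 < q)%N ->
  (x * q * q == y * q * q %[mod p * q])%N -> (x == y %[mod p])%N.
Proof.
move=> co_pq q_gt0; rewrite -!muln_modl // eqn_pmul2r //.
wlog le_yx : x y / (y <= x)%N.
  move=> wlog_xy; case: (leqP y x) => [|/ltnW le_xy]; first exact: wlog_xy.
  by rewrite eq_sym => /(wlog_xy _ _ le_xy); rewrite eq_sym.
by rewrite !eqn_mod_dvd ?leq_mul2r ?le_yx ?orbT // -mulnBl Gauss_dvdl.
Qed.

Lemma ffun_mulrn_Zp_char (I : finType) m (f : {ffun I -> 'Z_m}) :
  (1 < m)%N -> f *+ m = 0.
Proof.
by move=> m_gt1; apply/ffunP => x; rewrite ffunMnE ffunE -mulr_natr pchar_Zp // mulr0.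
Qed.

Section BlockLabeling.
Variables (p q : nat).
Hypotheses (p_pr : prime p) (q_pr : prime q) (p_neq_q : p != q).
Variables (n : nat) (B : {set 'I_n}).
Local Notation m := (p * q)%N.
Local Notation spline := (@is_spline n m).

Let p_gt1 : (1 < p)%N. Proof. exact: prime_gt1. Qed.
Let q_gt1 : (1 < q)%N. Proof. exact: prime_gt1. Qed.
Let m_gt1 : (1 < m)%N. Proof. by rewrite (ltn_trans p_gt1) // ltn_Pmulr // ltnW. Qed.
Let p_dvd_m : (p %| m)%N. Proof. exact: dvdn_mulr. Qed.
Let q_dvd_m : (q %| m)%N. Proof. exact: dvdn_mull. Qed.
Let coprime_pq : coprime p q. Proof. by rewrite prime_coprime // dvdn_prime2. Qed.

Definition block_labeling (E : {set 'I_n}) : {set 'Z_m} :=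
  if E \subset B then multiples m p else multiples m q.

Lemma block_labeling_edge u v : block_labeling [set u; v] =
  if (u \in B) && (v \in B) then multiples m p else multiples m q.
Proof. by rewrite /block_labeling subUset !sub1set. Qed.

Lemma block_edge_labeling : edge_labeling block_labeling.
Proof.
move=> u v _; rewrite block_labeling_edge.
by case: ifP => _; apply: multiples_nonzero_proper => //;
  rewrite ?p_gt1 ?q_gt1 ?ltn_Pmulr ?ltn_Pmull // ltnW.
Qed.

Lemma block_spline_intro (f : {ffun 'I_n -> 'Z_m}) :
  {in B &, forall u v, f u = f v} -> (forall u v, f u - f v \in multiples m q) ->
  spline block_labeling f.
Proof.
move=> f_const f_q u v _; rewrite block_labeling_edge.
case: ifP => [/andP[uB vB]|_]; last exact: f_q.
by rewrite (f_const u v) // subrr multiples0.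
Qed.

Lemma block_spline_out f u v : spline block_labeling f -> u \notin B ->
  f u - f v \in multiples m q.
Proof.
move=> f_spline uB; have [<-|neq_uv] := eqVneq u v; first by rewrite subrr multiples0.
by have := f_spline u v neq_uv; rewrite block_labeling_edge (negbTE uB).
Qed.

Lemma block_spline_const w f : w \notin B -> spline block_labeling f ->
  {in B &, forall u v, f u = f v}.
Proof.
move=> wB f_spline u v uB vB; apply/eqP; rewrite -subr_eq0; apply/eqP.
have [<-|neq_uv] := eqVneq u v; first by rewrite subrr.
apply: (multiplesI_coprime m_gt1 coprime_pq (dvdnn m)).
  by have := f_spline u v neq_uv; rewrite block_labeling_edge uB vB.
have -> : f u - f v = (f w - f v) - (f w - f u) by rewrite opprB [RHS]addrC addrA subrK.
by apply: multiplesB => //; apply: block_spline_out.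
Qed.

Definition block_qdelta (v : 'I_n) : {ffun 'I_n -> 'Z_m} :=
  [ffun x => if x == v then q%:R else 0].

Definition block_generators : {set {ffun 'I_n -> 'Z_m}} :=
  [ffun => 1] |: [set block_qdelta v | v in ~: B].

Lemma card_block_generators : (#|block_generators| <= #|~: B|.+1)%N.
Proof. by rewrite cardsU1 -[#|~: B|.+1]add1n leq_add ?leq_b1 ?leq_imset_card. Qed.

Lemma block_generators_spline : {in block_generators, forall s, spline block_labeling s}.
Proof.
move=> s /setU1P[-> | /imsetP[v vB ->]]; apply: block_spline_intro.
- by move=> x y _ _; rewrite !ffunE.
- by move=> x y; rewrite !ffunE subrr multiples0.
- have neq_v z : z \in B -> (z == v) = false.
    by move=> zB; apply: contraTF vB => /eqP <-; rewrite inE negbK.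
  by move=> x y xB yB; rewrite !ffunE !neq_v.
- move=> x y; apply: multiplesB => //; rewrite ffunE;
  by case: ifP; rewrite ?multiples0 // natr_multiplesE.
Qed.

Section Decomposition.
Variables (b0 w : 'I_n).
Hypotheses (b0B : b0 \in B) (wB : w \notin B).

Lemma block_spline_decomposition f : spline block_labeling f ->
  f = [ffun => 1] *+ f b0 + \sum_(v in ~: B) block_qdelta v *+ (val (f v - f b0) %/ q).
Proof.
move=> f_spline; apply/ffunP => x; rewrite ffunE ffunMnE ffunE natr_Zp sum_ffunE.
under eq_bigr => v _ do rewrite ffunMnE ffunE.
case xB: (x \in B).
  rewrite big1 ?addr0 => [|v]; first exact: (block_spline_const wB f_spline xB b0B).
  by rewrite inE; case: eqVneq => [<-|]; rewrite ?xB ?mul0rn.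
rewrite (bigD1 x) ?inE ?xB // eqxx big1 ?Monoid.mulm1 => [|v /andP[_]]; last first.
  by rewrite eq_sym => /negbTE ->; rewrite mul0rn.
have := block_spline_out b0 f_spline (negbT xB); rewrite inE => q_dvd.
by rewrite -mulrnA [(q * _)%N]mulnC divnK // natr_Zp addrC subrK.
Qed.

Lemma block_generates : generates block_labeling block_generators.
Proof.
split=> [|f f_spline]; first exact: block_generators_spline.
suff f_span : in_zspan block_generators id f by [].
rewrite (block_spline_decomposition f_spline); apply: in_zspanD.
  exact: (in_zspanMn (A := block_generators) id _ (setU11 _ _)).
apply: in_zspan_sum => v vB.
exact: (in_zspanMn (A := block_generators) id _ (setU1r _ (imset_f _ vB))).
Qed.

End Decomposition.

(* [insub] sends all of B to [None], so a test spline is constant on B. *)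
Definition block_test_spline (d : {ffun option {v : 'I_n | v \notin B} -> 'I_p}) :
  {ffun 'I_n -> 'Z_m} := [ffun v => (q * d (insub v))%:R].

Lemma block_test_spline_spline d : spline block_labeling (block_test_spline d).
Proof.
apply: block_spline_intro => [u v uB vB | u v]; rewrite !ffunE.
  by rewrite !insubN ?negbK.
by apply: multiplesB => //; rewrite natr_multiplesE // dvdn_mulr.
Qed.

Lemma block_test_spline_mulrn_inj b0 : b0 \in B ->
  injective (fun d => block_test_spline d *+ q).
Proof.
move=> b0B d d' /ffunP eq_dd'; apply/ffunP => o.
have [v insub_v] : exists v, insub v = o.
  by case: o => [u|]; [exists (val u); exact: valK | exists b0; rewrite insubN ?negbK].
have := eq_dd' v; rewrite !ffunMnE !ffunE insub_v -!mulrnA.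
move/(congr1 val)/eqP; rewrite /= !val_Zp_nat // ![(q * _)%N]mulnC.
move/(eqn_mod_mul_sqr coprime_pq (ltnW q_gt1)); rewrite !modn_small //.
by move/eqP/val_inj.
Qed.

Lemma block_rank_lower b0 S : b0 \in B -> generates block_labeling S ->
  (#|~: B|.+1 <= #|S|)%N.
Proof.
move=> b0B [_ S_span]; rewrite -(leq_exp2l _ _ p_gt1).
(* Multiplying by q makes every spline p-torsion but stays injective on test splines. *)
have := card_le_zspan_torsion (A := S) (F := fun s => s *+ q) (prime_gt0 p_pr) _
  (block_test_spline_mulrn_inj b0B) _.
rewrite card_ffun card_option card_sig card_ord.
have -> : #|[pred v : 'I_n | v \notin B]| = #|~: B| by apply: eq_card => v; rewrite !inE.
apply=> [s _ | d].
  by rewrite -mulrnA [(q * p)%N]mulnC ffun_mulrn_Zp_char.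
have S_zspan f : spline block_labeling f -> in_zspan S id f by apply: S_span.
exact: in_zspan_mulrn q (S_zspan _ (block_test_spline_spline d)).
Qed.

Lemma block_spline_rank b0 w : b0 \in B -> w \notin B ->
  spline_rank_is block_labeling #|~: B|.+1.
Proof.
move=> b0B wB; split=> [|S S_gen]; last exact: block_rank_lower b0B S_gen.
exists block_generators; split; first exact: block_generates b0B wB.
apply/eqP; rewrite eqn_leq card_block_generators.
exact: block_rank_lower b0B (block_generates b0B wB).
Qed.

End BlockLabeling.

Lemma card_ord_lt n k : (k <= n)%N -> #|[set v : 'I_n | (v < k)%N]| = k.
Proof.
move=> le_kn; have widen_inj : injective (widen_ord le_kn).
  by move=> j j' eq_jj'; apply: val_inj; exact: (congr1 val eq_jj').
rewrite -[RHS](card_ord k) -(card_imset _ widen_inj).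
apply: eq_card => v; rewrite !inE; apply/idP/imsetP => [v_lt_k | [j _ ->]] //=.
by exists (Ordinal v_lt_k) => //; apply: val_inj.
Qed.

Theorem mainTheorem12 (p q : nat) :
  prime p -> prime q -> p != q ->
  forall n i : nat, (2 <= n)%N -> (2 <= i <= n)%N ->
  exists alpha : {set 'I_n} -> {set 'Z_(p * q)},
    edge_labeling alpha /\ spline_rank_is alpha i.
Proof.
move=> p_pr q_pr p_neq_q n i _ /andP[i_ge2 le_in].
have i_gt0 : (0 < i)%N by apply: leq_trans i_ge2.
have i1_gt0 : (0 < i.-1)%N by rewrite -ltnS prednK.
have i1_lt_n : (i.-1 < n)%N by rewrite prednK.
pose B := ~: [set v : 'I_n | (v < i.-1)%N].
have b0B : Ordinal i1_lt_n \in B by rewrite !inE ltnn.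
have wB : Ordinal (leq_ltn_trans (leq0n _) i1_lt_n) \notin B by rewrite !inE negbK.
exists (block_labeling p q B); split; first exact: block_edge_labeling.
have := block_spline_rank p_pr q_pr p_neq_q b0B wB.
by rewrite /B setCK (card_ord_lt (ltnW i1_lt_n)) (prednK i_gt0).
Qed.
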